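(* Let $h$ be a positive integer and $L$ an $h$-modular lattice with zero. Let $x\in\mathcal{A}'$ and let $n,k$ be nonnegative integers. If $n\geq d(x)$, then $x^{(k)}(a_n)=x(a_\infty)$ and $x^{(k)}(b_n)=x(b_\infty)$. In particular, $d(x^{(k)})\leq d(x)$.
   Context: $K$ is the lattice consisting of $\varnothing$, $C=\{c\}$, $A_m=\{a_k:k\geq m\}$, $B_n=\{b_k:k\geq n\}$ ($m,n<\omega$), and $C\cup A_m\cup B_n$ with $|m-n|\leq1$, ordered by inclusion; $a_n,b_n,c$ denote $A_n,B_n,C$, so $\mathrm{J}(K)=\{c\}\cup\{a_n\}\cup\{b_n\}$ with $a_0>a_1>\cdots$, $b_0>b_1>\cdots$ and no other comparabilities. $\mathcal{A}$ is the set of antitone maps $x\colon\mathrm{J}(K)\to L$ ($p\leq q\Rightarrow x(p)\geq x(q)$) with finite range. For $x\in\mathcal{A}$, $x(a_\infty)$, $x(b_\infty)$ are the eventual values of the increasing sequences $(x(a_n))$, $(x(b_n))$, and $d(x)$ is the least $d\geq0$ with $x(a_n)=x(a_\infty)$ and $x(b_n)=x(b_\infty)$ for all $n\geq d$. The map $x^{(1)}$ is defined by $x^{(1)}(c)=x(c)\vee(x(a_\infty)\wedge x(b_\infty))$, $x^{(1)}(a_0)=x(a_0)$, $x^{(1)}(b_0)=x(b_0)$, $x^{(1)}(a_{n+1})=x(a_{n+1})\vee(x(b_n)\wedge x(c))$, $x^{(1)}(b_{n+1})=x(b_{n+1})\vee(x(a_n)\wedge x(c))$; $\mathcal{A}$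 is closed under $x\mapsto x^{(1)}$, and $x^{(0)}=x$, $x^{(k+1)}=(x^{(k)})^{(1)}$. Put $\ell(x)=\langle x(a_\infty),x(b_\infty),x(c)\rangle$ and $\mathcal{A}'=\{x\in\mathcal{A}:\ell(x^{(1)})=\ell(x)\}$. $L$ is $h$-modular if $u^{(h+1)}=u^{(h)}$ for all $u\in L^3$, where $\langle x,y,z\rangle^{(1)}=\langle x\vee(y\wedge z),y\vee(x\wedge z),z\vee(x\wedge y)\rangle$. *)

From HB Require Import structures.
From mathcomp Require Import all_boot all_order.
From Stdlib Require Import ClassicalEpsilon.
Set Implicit Arguments. Unset Strict Implicit. Unset Printing Implicit Defensive.
Import Order.TTheory.
Local Open Scope order_scope.

(* The join-irreducibles J(K) = {c} ∪ {a_n} ∪ {b_n}. *)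
Inductive JK : Type := Jc | Ja of nat | Jb of nat.

Definition JK_le (p q : JK) : bool :=
  match p, q with
  | Jc, Jc => true
  | Ja n, Ja m => (m <= n)%N
  | Jb n, Jb m => (m <= n)%N
  | _, _ => false
  end.

Section A.
Context {disp : Order.disp_t} {L : latticeType disp}.

Definition inA (x : JK -> L) : Prop :=
  (forall p q, JK_le p q -> x q <= x p) /\
  (exists s : seq L, forall p, x p \in s).

Definition aInf (x : JK -> L) : L :=
  epsilon (inhabits (x Jc))
    (fun v => exists N, forall n, (N <= n)%N -> x (Ja n) = v).
Definition bInf (x : JK -> L) : L :=
  epsilon (inhabits (x Jc))
    (fun v => exists N, forall n, (N <= n)%N -> x (Jb n) = v).

Definition stab (x : JK -> L) (d : nat) : Prop :=
  forall n, (d <= n)%N -> x (Ja n) = aInf x /\ x (Jb n) = bInf x.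
Definition dx (x : JK -> L) : nat :=
  epsilon (inhabits 0%N)
    (fun d => stab x d /\ forall d', stab x d' -> (d <= d')%N).

Definition step (x : JK -> L) : JK -> L := fun p =>
  match p with
  | Jc => x Jc `|` (aInf x `&` bInf x)
  | Ja 0 => x (Ja 0)
  | Jb 0 => x (Jb 0)
  | Ja n.+1 => x (Ja n.+1) `|` (x (Jb n) `&` x Jc)
  | Jb n.+1 => x (Jb n.+1) `|` (x (Ja n) `&` x Jc)
  end.

Definition stepk (k : nat) (x : JK -> L) : JK -> L := iter k step x.

Definition ell (x : JK -> L) : L * L * L := (aInf x, bInf x, x Jc).

Definition inA' (x : JK -> L) : Prop := inA x /\ ell (step x) = ell x.

Definition tri_step (u : L * L * L) : L * L * L :=
  let: (x, y, z) := u in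
  (x `|` (y `&` z), y `|` (x `&` z), z `|` (x `&` y)).

Definition hmodular (h : nat) : Prop :=
  forall u : L * L * L, iter h.+1 tri_step u = iter h tri_step u.
End A.

(** Since [x] lies in 𝒜', the triple ℓ(x) = ⟨α, β, γ⟩ is a fixed point of the
    map ⟨x, y, z⟩ ↦ ⟨x ∨ (y ∧ z), y ∨ (x ∧ z), z ∨ (x ∧ y)⟩, i.e.
    β ∧ γ ≤ α, α ∧ γ ≤ β and α ∧ β ≤ γ.  These inequalities make the step
    map preserve the following frame: every x(a_n) is below α, every x(b_n)
    below β, x(c) = γ, and x(a_n) = α, x(b_n) = β for n ≥ d(x).  For
    instance x(a_{n+1}) ∨ (x(b_n) ∧ γ) ≤ α ∨ (β ∧ γ) = α.  Induction on k
    gives the frame for every x^(k). *)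

From HB Require Import structures.
From mathcomp Require Import all_boot all_order.
From Stdlib Require Import Classical ClassicalEpsilon.
From mathcomp Require Import zify.
Import Order.TTheory.
Set Implicit Arguments.
Unset Strict Implicit.

Lemma classic_ex_minn (P : nat -> Prop) :
  (exists n, P n) -> exists m, P m /\ forall n, P n -> (m <= n)%N.
Proof.
move=> [n]; elim/ltn_ind: n => n IH Pn.
case: (classic (exists m, (m < n)%N /\ P m)) => [[m [ltmn Pm]]|none].
  exact: IH ltmn Pm.
exists n; split=> // m Pm; rewrite leqNgt; apply/negP => ltmn.
by apply: none; exists m.
Qed.

Lemma sub_count_ltn (T : eqType) (p q : pred T) (s : seq T) z :
  subpred p q -> z \in s -> q z -> ~~ p z -> (count p s < count q s)%N.
Proof.
move=> pq zs qz npz.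
have split_q : count q s = count p s + count (predD q p) s.
  have union_q : predU p (predD q p) =1 q.
    by move=> y /=; case py: (p y); rewrite ?(pq _ py).
  have meet_0 : predI p (predD q p) =1 pred0 by move=> y /=; case: (p y).
  by rewrite -count_predUI (eq_count union_q) (eq_count meet_0) count_pred0 addn0.
rewrite split_q -[X in (X < _)%N]addn0 ltn_add2l -has_count.
by apply/hasP; exists z => //=; rewrite qz npz.
Qed.

Lemma nondecreasing_finite_range_stationary disp (T : porderType disp)
    (f : nat -> T) (s : seq T) :
  {homo f : m n / (m <= n)%N >-> (m <= n)%O} -> (forall n, f n \in s) ->
  exists N, forall n, (N <= n)%N -> f n = f N.
Proof.
move=> f_homo f_in.
pose below n := count (fun y => (y <= f n)%O) s.
have below_le n : (below n <= size s)%N by apply: count_size.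
(* [size s - below N] bounds the number of strict increases of [f] after [N]. *)
suff: forall k N, (size s - below N < k)%N ->
    exists M, forall n, (M <= n)%N -> f n = f M.
  by move=> stationary; apply: (stationary _ 0%N (ltnSn _)).
elim=> [//|k IH] N bound.
case: (classic (exists n, (N <= n)%N /\ f n <> f N)) => [[n [leNn neq]]|const].
  have ltNn : (f N < f n)%O by rewrite lt_def f_homo // andbT; apply/eqP.
  have : (below N < below n)%N.
    apply: (@sub_count_ltn _ _ _ _ (f n)) => //=; last by rewrite lt_geF.
    by move=> y /= /le_trans; apply; rewrite f_homo.
  by move=> below_lt; apply: (IH n); move: (below_le n) bound below_lt; lia.
exists N => n leNn; apply: NNPP => neq.
by apply: const; exists n.
Qed.

Lemma epsilon_eventual_value (T : Type) (i : inhabited T) (f : nat -> T) N v :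
  (forall n, (N <= n)%N -> f n = v) ->
  epsilon i (fun w => exists N, forall n, (N <= n)%N -> f n = w) = v.
Proof.
move=> fv.
set P := fun w => _.
have [M fM] : P (epsilon i P) by apply: epsilon_spec; exists v, N.
by rewrite -(fM (maxn N M)) ?leq_maxr // fv ?leq_maxl.
Qed.

Section Frame.
Context {disp : Order.disp_t} {L : latticeType disp}.
Local Open Scope order_scope.
Implicit Types (x y : JK -> L) (al be ga : L).

Lemma aInf_eq x N v : (forall n, (N <= n)%N -> x (Ja n) = v) -> aInf x = v.
Proof. exact: epsilon_eventual_value. Qed.

Lemma bInf_eq x N v : (forall n, (N <= n)%N -> x (Jb n) = v) -> bInf x = v.
Proof. exact: epsilon_eventual_value. Qed.

Lemma dx_spec x d : stab x d -> stab x (dx x) /\ (dx x <= d)%N.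
Proof.
move=> xd; rewrite /dx; set P := fun e => _.
have [stab_dx dx_min] : P (epsilon (inhabits 0%N) P).
  by apply: epsilon_spec; apply: classic_ex_minn; exists d.
by split; last apply: dx_min.
Qed.

Lemma inA_stab x : inA x -> exists d, stab x d.
Proof.
move=> [x_anti [s x_in]].
have [Na xa] := @nondecreasing_finite_range_stationary _ _ (fun n => x (Ja n)) s
  (fun m n mn => x_anti (Ja n) (Ja m) mn) (fun n => x_in _).
have [Nb xb] := @nondecreasing_finite_range_stationary _ _ (fun n => x (Jb n)) s
  (fun m n mn => x_anti (Jb n) (Jb m) mn) (fun n => x_in _).
rewrite /stab (aInf_eq xa) (bInf_eq xb).
by exists (maxn Na Nb) => n; rewrite geq_max => /andP [/xa -> /xb ->].
Qed.

Lemma ell_step x d : stab x d -> ell (step x) = tri_step (ell x).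
Proof.
move=> xd; rewrite /ell /=.
have step_a : aInf (step x) = aInf x `|` (bInf x `&` x Jc).
  apply: (aInf_eq (N := d.+1)) => -[|n] //= dn.
  by have [-> _] := xd _ (leqW dn); have [_ ->] := xd _ dn.
have step_b : bInf (step x) = bInf x `|` (aInf x `&` x Jc).
  apply: (bInf_eq (N := d.+1)) => -[|n] //= dn.
  by have [_ ->] := xd _ (leqW dn); have [-> _] := xd _ dn.
by rewrite step_a step_b.
Qed.

Lemma tri_step_fixed al be ga :
  tri_step (al, be, ga) = (al, be, ga) ->
  [/\ be `&` ga <= al, al `&` ga <= be & al `&` be <= ga].
Proof. by case=> /join_idPl ? /join_idPl ? /join_idPl ?. Qed.

Definition framed_by al be ga d y : Prop :=
  [/\ forall m, y (Ja m) <= al /\ y (Jb m) <= be, y Jc = ga &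
      forall n, (d <= n)%N -> y (Ja n) = al /\ y (Jb n) = be].

Lemma framed_by_ell al be ga d y :
  framed_by al be ga d y -> ell y = (al, be, ga).
Proof.
move=> [_ yc ytail]; rewrite /ell yc.
rewrite (aInf_eq (fun n dn => (ytail n dn).1)).
by rewrite (bInf_eq (fun n dn => (ytail n dn).2)).
Qed.

Lemma framed_by_stab al be ga d y : framed_by al be ga d y -> stab y d.
Proof.
move=> fy; have [ya yb _] := framed_by_ell fy.
by rewrite /stab ya yb; case: fy.
Qed.

Lemma inA_framed_by x d :
  inA x -> stab x d -> framed_by (aInf x) (bInf x) (x Jc) d x.
Proof.
move=> [x_anti _] xd; split=> // m.
have [<- <-] := xd (maxn m d) (leq_maxr _ _).
by split; apply: x_anti; rewrite /= leq_maxl.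
Qed.

Lemma framed_by_step al be ga d y :
  tri_step (al, be, ga) = (al, be, ga) ->
  framed_by al be ga d y -> framed_by al be ga d (step y).
Proof.
move=> /tri_step_fixed [bga_al aga_be abe_ga] fy.
have [ybound yc ytail] := fy; have [ya yb _] := framed_by_ell fy.
have capa m : y (Jb m) `&` y Jc <= al.
  by apply: le_trans bga_al; rewrite yc leI2 ?(ybound m).2.
have capb m : y (Ja m) `&` y Jc <= be.
  by apply: le_trans aga_be; rewrite yc leI2 ?(ybound m).1.
split.
- case=> [|m] /=; first exact: ybound.
  by rewrite !leUx (ybound m.+1).1 (ybound m.+1).2 capa capb.
- by rewrite /= ya yb yc join_l.
- case=> [|m] /= dn; first exact: ytail.
  by have [-> ->] := ytail _ dn; rewrite !join_l ?capa ?capb.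
Qed.

Lemma framed_by_stepk al be ga d y k :
  tri_step (al, be, ga) = (al, be, ga) ->
  framed_by al be ga d y -> framed_by al be ga d (stepk k y).
Proof. by move=> fixed fy; elim: k => // k; apply: framed_by_step. Qed.

End Frame.

Theorem lemma5p4 (disp : Order.disp_t) (L : bLatticeType disp) (h : nat) :
  (0 < h)%N -> @hmodular disp L h ->
  forall x : JK -> L, inA' x ->
  forall k : nat,
    (forall n : nat, (dx x <= n)%N ->
       stepk k x (Ja n) = aInf x /\ stepk k x (Jb n) = bInf x) /\
    (dx (stepk k x) <= dx x)%N.
Proof.
move=> _ _ x [xA ell_fixed] k.
have [d /dx_spec [x_stab _]] := inA_stab xA.
have fixed : tri_step (ell x) = ell x by rewrite -(ell_step x_stab).
have fk := framed_by_stepk k fixed (inA_framed_by xA x_stab).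
split; first by case: fk.
exact: (dx_spec (framed_by_stab fk)).2.
Qed.
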